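(* Consider the two-route traffic model with affine routing ratios described in the context, and assume that $\phi r_\ell^0\le F_\ell$ for $\ell=1,2$. For $\alpha\in(0,1]$ let $\overline{x}(\alpha)$ be the unique equilibrium of the system with penetration rate $\alpha$. Let $i\in\{1,2\}$ and $j=3-i$. Then $\phi R_i(\overline{x}(\alpha))>F_i$ (unsatisfied demand on route $i$ at equilibrium) if and only if $\phi>F_i(1+E_j/E_i)-E_j(1-2r_i^0)$ and $\alpha>\underline{\alpha}_i:=\dfrac{2E_iE_j(F_i-\phi r_i^0)}{\phi\big(E_iE_j(1-2r_i^0)+\phi E_i-F_i(E_i+E_j)\big)}$.
   Context: Two routes $i=1,2$ connect an origin to a destination, with positive parameters $B_i$ (jam density), $C_i$ (critical density), $F_i$ (capacity), $C_i<B_i$, and constant demand $\phi>0$. Set $v_i=F_i/C_i$ and $E_i=v_iB_i$. The state $x=(x_1,x_2)\in\Omega:=[0,B_1]\times[0,B_2]$ evolves by $\dot x_i=\min\{\phi R_i(x),S_i(x_i)\}-D_i(x_i)$, with $S_i(x_i)=F_i$ if $x_i<C_i$, $S_i(x_i)=\frac{F_i}{B_i-C_i}(B_i-x_i)$ otherwise; $D_i(x_i)=v_ix_i$ if $x_i<C_i$, $D_i(x_i)=F_i$ otherwise. The routing ratios are affine: with penetration rate $\alpha\in(0,1]$ and constants $r_1^0,r_2^0\ge0$, $r_1^0+r_2^0=1$, $R_1(x)=(1-\alpha)r_1^0+\alpha\big(\tfrac12+\tfrac12(\tfrac{x_2}{B_2}-\tfrac{x_1}{B_1})\big)$, $R_2(x)=(1-\alpha)r_2^0+\alpha\big(\tfrac12+\tfrac12(\tfrac{x_1}{B_1}-\tfrac{x_2}{B_2})\big)$.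 Standing assumptions: $\phi<F_1+F_2$; $F_i>(1-\alpha)\phi r_i^0$ for $i=1,2$; $\phi<E_i$ for $i=1,2$. Under these assumptions the system has, for each $\alpha$, a unique equilibrium $\overline{x}(\alpha)\in\Omega$. *)

(* concrete reals R. Routes are indexed by nat; only 1 and 2 are used. *)
From Stdlib Require Import Reals Lra.
Open Scope R_scope.

Definition vel (F C : nat -> R) (i : nat) : R := F i / C i.
Definition Ecap (B C F : nat -> R) (i : nat) : R := vel F C i * B i.

Definition supply (B C F : nat -> R) (i : nat) (xi : R) : R :=
  if Rlt_dec xi (C i) then F i else F i / (B i - C i) * (B i - xi).
Definition demand (C F : nat -> R) (i : nat) (xi : R) : R :=
  if Rlt_dec xi (C i) then vel F C i * xi else F i.

Definition routing (B r0 : nat -> R) (alpha : R) (i : nat) (x : nat -> R) : R :=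
  (1 - alpha) * r0 i
  + alpha * (1/2 + 1/2 * (x (3 - i)%nat / B (3 - i)%nat - x i / B i)).

Definition field (B C F r0 : nat -> R) (phi alpha : R) (i : nat) (x : nat -> R) : R :=
  Rmin (phi * routing B r0 alpha i x) (supply B C F i (x i)) - demand C F i (x i).

Definition is_equilibrium (B C F r0 : nat -> R) (phi alpha : R) (x : nat -> R) : Prop :=
  0 <= x 1%nat <= B 1%nat /\ 0 <= x 2%nat <= B 2%nat /\
  field B C F r0 phi alpha 1 x = 0 /\ field B C F r0 phi alpha 2 x = 0.

Definition alpha_low (B C F r0 : nat -> R) (phi : R) (i : nat) : R :=
  let Ei := Ecap B C F i in
  let Ej := Ecap B C F (3 - i)%nat in
  2 * Ei * Ej * (F i - phi * r0 i)
  / (phi * (Ei * Ej * (1 - 2 * r0 i) + phi * Ei - F i * (Ei + Ej))).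

(* At equilibrium each route carries min(phi R_l, F_l), and its normalised
   density y_l = x_l / B_l satisfies E_l y_l = min(phi R_l, F_l).  Feeding the
   two densities back into the affine routing ratio turns the equilibrium
   condition into one identity,
     alpha phi K_i - 2 E_i E_j (F_i - phi r_i^0)
       = 2 E_i E_j (phi R_i - F_i) + alpha phi E_i (phi - F_i - m_j)
         + alpha phi E_j (m_i - F_i),
   with m_l = min(phi R_l, F_l) and K_i = E_i E_j (1 - 2 r_i^0) + phi E_i
   - F_i (E_i + E_j).  Because phi < F_1 + F_2, every term on the right is
   >= 0 when phi R_i > F_i and <= 0 otherwise, the first one strictly, so demand
   on route i is unsatisfied iff the left-hand side is positive.  Solving that inequality for
   alpha gives alpha > alpha_i together with K_i > 0, and
   K_i = E_i (phi - F_i (1 + E_j/E_i) + E_j (1 - 2 r_i^0)) is the bound on phi. *)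
From Stdlib Require Import Reals Lra Lia.
Open Scope R_scope.

Lemma equilibrium_outflow (B C F : nat -> R) (l : nat) (p xl : R) :
  0 < C l -> C l < B l -> 0 < F l ->
  Rmin p (supply B C F l xl) - demand C F l xl = 0 ->
  xl / B l * Ecap B C F l = Rmin p (F l).
Proof.
  intros HC HCB HF Hbal.
  unfold supply, demand, Ecap, vel in *.
  destruct (Rlt_dec xl (C l)) as [Hfree | Hcong].
  - replace (xl / B l * (F l / C l * B l)) with (F l / C l * xl) by (field; lra).
    lra.
  - (* congested: the outflow F can only be matched by a supply equal to F, i.e. at x_l = C_l *)
    set (k := F l / (B l - C l)) in Hbal.
    assert (Hk : 0 < k) by (apply Rdiv_lt_0_compat; lra).
    assert (HkF : k * (B l - C l) = F l) by (unfold k; field; lra).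
    assert (Hsupply : k * (B l - xl) = F l).
    { pose proof (Rmin_r p (k * (B l - xl))). nra. }
    assert (Hxl : xl = C l) by nra.
    assert (Hp : F l <= p) by (pose proof (Rmin_l p (k * (B l - xl))); lra).
    rewrite Rmin_right, Hxl by exact Hp.
    field; lra.
Qed.

Lemma equilibrium_route_outflow (B C F r0 : nat -> R) (phi alpha : R) (x : nat -> R)
  (l : nat) :
  (l = 1 \/ l = 2)%nat -> 0 < C l -> C l < B l -> 0 < F l ->
  is_equilibrium B C F r0 phi alpha x ->
  x l / B l * Ecap B C F l = Rmin (phi * routing B r0 alpha l x) (F l).
Proof.
  intros Hl HC HCB HF [_ [_ [Hbal1 Hbal2]]].
  apply (equilibrium_outflow B C F l _ _ HC HCB HF).
  destruct Hl as [-> | ->]; assumption.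
Qed.

Lemma routing_add_other (B r0 : nat -> R) (alpha : R) (x : nat -> R) (i : nat) :
  (i = 1 \/ i = 2)%nat -> r0 1%nat + r0 2%nat = 1 ->
  routing B r0 alpha i x + routing B r0 alpha (3 - i) x = 1.
Proof.
  intros [-> | ->] Hr; unfold routing; simpl;
    generalize (x 1%nat / B 1%nat) (x 2%nat / B 2%nat); intros y1 y2;
    replace (r0 2%nat) with (1 - r0 1%nat) by lra; field.
Qed.

Lemma threshold_gap_eq (phi alpha Ea Eb Fa ra ya yb Ra : R) :
  Ra = (1 - alpha) * ra + alpha * (1/2 + 1/2 * (yb - ya)) ->
  alpha * (phi * (Ea * Eb * (1 - 2 * ra) + phi * Ea - Fa * (Ea + Eb)))
    - 2 * Ea * Eb * (Fa - phi * ra)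
  = 2 * Ea * Eb * (phi * Ra - Fa) + alpha * phi * Ea * (phi - Fa - yb * Eb)
    + alpha * phi * Eb * (ya * Ea - Fa).
Proof. intros ->; field. Qed.

Lemma gap_pos_iff (c0 c1 c2 phi pa Fa Fb : R) :
  0 < c0 -> 0 <= c1 -> 0 <= c2 -> phi < Fa + Fb ->
  0 < c0 * (pa - Fa) + c1 * (phi - Fa - Rmin (phi - pa) Fb) + c2 * (Rmin pa Fa - Fa)
  <-> Fa < pa.
Proof.
  intros H0 H1 H2 Hcap.
  unfold Rmin; destruct (Rle_dec pa Fa), (Rle_dec (phi - pa) Fb); split; intro; nra.
Qed.

Lemma lt_mul_iff_lt_div (a c k : R) :
  0 < a -> 0 <= c -> c < a * k <-> 0 < k /\ c / k < a.
Proof.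
  intros Ha Hc; split.
  - intro Hlt.
    assert (Hk : 0 < k) by nra.
    split; [exact Hk |].
    apply (Rmult_lt_reg_r k); [exact Hk |].
    unfold Rdiv; rewrite Rmult_assoc, Rinv_l by lra; lra.
  - intros [Hk Hlt].
    apply (Rmult_lt_compat_r k) in Hlt; [| exact Hk].
    unfold Rdiv in Hlt; rewrite Rmult_assoc, Rinv_l in Hlt by lra; lra.
Qed.

Lemma unsatisfied_demand_iff (phi alpha Ea Eb Fa Fb ra ya yb Ra Rb : R) :
  0 < phi -> 0 < alpha -> 0 < Ea -> 0 < Eb -> phi * ra <= Fa -> phi < Fa + Fb ->
  Ra = (1 - alpha) * ra + alpha * (1/2 + 1/2 * (yb - ya)) -> Ra + Rb = 1 ->
  ya * Ea = Rmin (phi * Ra) Fa -> yb * Eb = Rmin (phi * Rb) Fb ->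
  phi * Ra > Fa <->
  (phi > Fa * (1 + Eb / Ea) - Eb * (1 - 2 * ra) /\
   alpha > 2 * Ea * Eb * (Fa - phi * ra)
           / (phi * (Ea * Eb * (1 - 2 * ra) + phi * Ea - Fa * (Ea + Eb)))).
Proof.
  intros Hphi Halpha HEa HEb Hdem Hcap HRa HRsum Hya Hyb.
  set (K := Ea * Eb * (1 - 2 * ra) + phi * Ea - Fa * (Ea + Eb)).
  assert (HEE : 0 < Ea * Eb) by nra.
  assert (Hap : 0 < alpha * phi) by nra.
  assert (Hunsat : Fa < phi * Ra <-> 2 * Ea * Eb * (Fa - phi * ra) < alpha * (phi * K)).
  { assert (HRb : phi * Rb = phi - phi * Ra) by (replace Rb with (1 - Ra) by lra; ring).
    rewrite HRb in Hyb.
    rewrite <- (gap_pos_iff (2 * Ea * Eb) (alpha * phi * Ea) (alpha * phi * Eb)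
                  phi (phi * Ra) Fa Fb) by nra.
    rewrite <- Hya, <- Hyb, <- (threshold_gap_eq phi alpha Ea Eb Fa ra ya yb Ra HRa).
    fold K; lra. }
  assert (HK : K = Ea * (phi - (Fa * (1 + Eb / Ea) - Eb * (1 - 2 * ra))))
    by (unfold K; field; lra).
  assert (Hcrit : phi > Fa * (1 + Eb / Ea) - Eb * (1 - 2 * ra) <-> 0 < K)
    by (rewrite HK; split; intro; nra).
  assert (HphiK : 0 < phi * K <-> 0 < K) by (split; intro; nra).
  unfold Rgt; rewrite Hunsat, lt_mul_iff_lt_div, HphiK, Hcrit by nra.
  reflexivity.
Qed.

Theorem proposition3
  (B C F r0 : nat -> R) (phi alpha : R)
  (HB : forall l, (l = 1 \/ l = 2)%nat -> 0 < B l)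
  (HC : forall l, (l = 1 \/ l = 2)%nat -> 0 < C l)
  (HF : forall l, (l = 1 \/ l = 2)%nat -> 0 < F l)
  (HCB : forall l, (l = 1 \/ l = 2)%nat -> C l < B l)
  (Hphi : 0 < phi)
  (Hr0 : forall l, (l = 1 \/ l = 2)%nat -> 0 <= r0 l)
  (Hr0sum : r0 1%nat + r0 2%nat = 1)
  (Halpha : 0 < alpha <= 1)
  (Hcap : phi < F 1%nat + F 2%nat)
  (Hpart : forall l, (l = 1 \/ l = 2)%nat -> F l > (1 - alpha) * phi * r0 l)
  (HE : forall l, (l = 1 \/ l = 2)%nat -> phi < Ecap B C F l)
  (Hdem : forall l, (l = 1 \/ l = 2)%nat -> phi * r0 l <= F l)
  (i : nat) (Hi : (i = 1 \/ i = 2)%nat)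
  (x : nat -> R) (Hx : is_equilibrium B C F r0 phi alpha x) :
  let j := (3 - i)%nat in
  phi * routing B r0 alpha i x > F i <->
  (phi > F i * (1 + Ecap B C F j / Ecap B C F i) - Ecap B C F j * (1 - 2 * r0 i)
   /\ alpha > alpha_low B C F r0 phi i).
Proof.
  intro j.
  assert (Hj : (j = 1 \/ j = 2)%nat) by (unfold j; lia).
  assert (Houtflow : forall l, (l = 1 \/ l = 2)%nat ->
            x l / B l * Ecap B C F l = Rmin (phi * routing B r0 alpha l x) (F l))
    by (intros l Hl; apply equilibrium_route_outflow; auto).
  assert (HEpos : forall l, (l = 1 \/ l = 2)%nat -> 0 < Ecap B C F l)
    by (intros l Hl; specialize (HE l Hl); lra).
  apply (unsatisfied_demand_iff _ _ _ _ _ (F j) _ (x i / B i) (x j / B j) _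
           (routing B r0 alpha j x)); auto; try lra.
  - unfold j; destruct Hi as [-> | ->]; simpl; lra.
  - apply routing_add_other; assumption.
Qed.
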